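(* Let $R$ be a route. Then $$\operatorname{conv}(\Pi(R))=\Big\{y\in\mathbb{R}^{[N]\times V_+}_{\ge 0}:\ y^\xi(R')\ge k_\xi(R')-1\ \text{ for all subroutes } R'\subseteq R \text{ and all } \xi\in[N]\Big\}.$$
   Context: $G=(V,E)$ is a complete undirected graph with $V=\{0\}\cup V_+$ ($0$ is the depot, $V_+$ the set of customers); $D=(V,A)$ is the digraph obtained by replacing each edge by two opposite arcs. $C\in\mathbb{Q}_{>0}$ is the vehicle capacity. There are $N$ scenarios $\xi\in[N]=\{1,\dots,N\}$, each with a demand vector $d^\xi\in\mathbb{Q}_{\ge 0}^{V_+}$ and probability $p_\xi\in[0,1]\cap\mathbb{Q}$, $\sum_\xi p_\xi=1$; it is assumed that $d^\xi(v)\le C$ for all $\xi\in[N]$, $v\in V_+$. For a vector $f$ and set $S$ of its coordinates, $f(S)=\sum_{i\in S}f(i)$; $k_\xi(S)=\lceil d^\xi(S)/C\rceil$. A route $R=(v_1,\dots,v_\ell)$ ($\ell\ge 1$, distinct customers $v_i\in V_+$) is the cycle $0,v_1,\dots,v_\ell,0$; $V_+(R)=\{v_1,\dots,v_\ell\}$ and $v_0=v_{\ell+1}=0$. A subroute of $R$ is a route $R'=(v_i,\dots,v_j)$ with $1\le i\le j\le \ell$, written $R'\subseteq R$. Vectors $y\in\mathbb{R}^{[N]\times V_+}$ have entries $y^\xi_v$; $y^\xi\in\mathbb{R}^{V_+}$ is the restriction to scenario $\xi$; $y^\xi(R')=y^\xi(V_+(R'))$, $k_\xi(R')=k_\xi(V_+(R'))$.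 For a route $R=(v_1,\dots,v_\ell)$ and $\xi\in[N]$, a recourse action is an integer vector $y^\xi\in\mathbb{Z}^{V_+}_{\ge 0}$ for which there exist $f\in\mathbb{R}^{A}_{\ge 0}$ and $g\in\mathbb{R}^{V_+}_{\ge 0}$ with $f_{(v_{i-1},v_i)}+d^\xi(v_i)=f_{(v_i,v_{i+1})}+g_{v_i}$ for all $i\in[\ell]$, $f_{(v_{i-1},v_i)}\le C$ for all $i\in[\ell+1]$, and $g_{v_i}\le C\,y^\xi_{v_i}$ for all $i\in[\ell]$. The set of recourse actions is $\mathcal{Y}^\xi(R)$, and the set of recourse policies is $\Pi(R)=\mathcal{Y}^1(R)\times\cdots\times\mathcal{Y}^N(R)\subseteq\mathbb{Z}^{[N]\times V_+}$. *)

From HB Require Import structures.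
From mathcomp Require Import all_boot all_order all_algebra.
From mathcomp Require Import reals.
Set Implicit Arguments. Unset Strict Implicit. Unset Printing Implicit Defensive.
Import Order.TTheory GRing.Theory Num.Theory.
Local Open Scope ring_scope.

(* Customers V_+ are the elements of a finType [V]; the vertex set
   V = {0} ∪ V_+ is [option V], with [None] the depot 0.
   A route R = (v_1,...,v_l) is a sequence [r : seq V] (nonempty, uniq). *)

(* v_i for i in 0..l+1 : v_0 = v_{l+1} = depot. *)
Definition pos (V : eqType) (r : seq V) (i : nat) : option V :=
  if i == 0%N then None else nth None (map Some r) i.-1.

(* Vertex sequence of the subroute (v_{a+1},...,v_{b+1}) (0-based a <= b < l). *)
Definition subroute (V : Type) (r : seq V) (a b : nat) : seq V :=
  take (b - a).+1 (drop a r).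

Definition kcap (V : Type) (C : rat) (dxi : V -> rat) (S : seq V) : int :=
  Num.ceil ((\sum_(v <- S) dxi v) / C).

Definition recourse_action (R : realType) (V : finType) (C : rat)
    (dxi : V -> rat) (r : seq V) (yxi : V -> nat) : Prop :=
  exists (f : option V -> option V -> R) (g : V -> R),
    (forall a b, 0 <= f a b) /\ (forall v, 0 <= g v) /\
    (forall i v, pos r i = Some v ->
        f (pos r i.-1) (pos r i) + ratr (dxi v) = f (pos r i) (pos r i.+1) + g v) /\
    (forall i, (1 <= i <= (size r).+1)%N -> f (pos r i.-1) (pos r i) <= ratr C) /\
    (forall i v, pos r i = Some v -> g v <= ratr C * (yxi v)%:R).

Definition policies (R : realType) (V : finType) (N : nat) (C : rat)
    (d : 'I_N -> V -> rat) (r : seq V) (y : 'I_N -> V -> R) : Prop :=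
  forall xi : 'I_N, exists z : V -> nat,
    (forall v, y xi v = (z v)%:R) /\ recourse_action R C (d xi) r z.

Definition conv (R : realType) (V : finType) (N : nat)
    (S : ('I_N -> V -> R) -> Prop) (y : 'I_N -> V -> R) : Prop :=
  exists (n : nat) (w : 'I_n -> R) (x : 'I_n -> 'I_N -> V -> R),
    (forall j, 0 <= w j) /\ \sum_(j < n) w j = 1 /\ (forall j, S (x j)) /\
    (forall xi v, y xi v = \sum_(j < n) w j * x j xi v).

Definition route_polyhedron (R : realType) (V : finType) (N : nat) (C : rat)
    (d : 'I_N -> V -> rat) (r : seq V) (y : 'I_N -> V -> R) : Prop :=
  (forall xi v, 0 <= y xi v) /\
  (forall (xi : 'I_N) (a b : nat), (a <= b < size r)%N ->
     \sum_(v <- subroute r a b) y xi v >= (kcap C (d xi) (subroute r a b))%:~R - 1).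

From mathcomp Require Import all_boot all_order all_algebra.
From mathcomp Require Import reals lra ring zify.
Set Implicit Arguments. Unset Strict Implicit. Unset Printing Implicit Defensive.
Import Order.TTheory GRing.Theory Num.Theory.
Local Open Scope ring_scope.

(* Every recourse action satisfies the subroute inequalities: along a
   subroute R' the entering flow is nonnegative and the leaving flow is at
   most C, so flow conservation gives d(R') <= C (y(R') + 1).
   Conversely, for an integer y satisfying them, let the vehicle pick up each
   demand and then unload as much as the y(v) depot trips allow; its load is
   then a sum of d - C y over a subroute ending at the current stop, hence at
   most C.
   Finally a real point y of the polyhedron, with prefix sums P_j along the
   route, is the average over a threshold t uniform in [0, 1) of the integer
   points y_t(v_j) = floor(P_j + y(v_j) + t) - floor(P_j + t), because
   floor(x + t) averages to x.  On a subroute y_t telescopes, so y_t satisfies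
   the subroute inequalities; and y_t only changes when t crosses one of
   finitely many breakpoints given by fractional parts of prefix sums, which
   turns the average into a finite convex combination. *)

Definition fracpart (R : archiRealFieldType) (x : R) : R := x - (Num.floor x)%:~R.

Lemma fracpart_itv (R : archiRealFieldType) (x : R) : 0 <= fracpart x < 1.
Proof.
have := floor_itv x; rewrite /fracpart intrD => /andP[floor_le lt_floor1].
by apply/andP; split; lra.
Qed.

Lemma floorD1B (R : archiRealFieldType) (x u : R) : 0 <= u <= 1 ->
  Num.floor (x + (1 - u)) = Num.floor x + ((u <= fracpart x)%R : nat)%:R.
Proof.
move=> /andP[u_ge0 u_le1]; have /andP[f_ge0 f_lt1] := fracpart_itv x.
have -> : x + (1 - u) = fracpart x + (1 - u) + (Num.floor x)%:~R.
  by rewrite /fracpart; ring.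
rewrite floorDrz ?intr_int // intrKfloor addrC; congr (_ + _); apply: floor_def.
by case: (lerP u (fracpart x)) => h;
  rewrite /= ?intrD ?rmorph0 ?rmorph1; apply/andP; split; lra.
Qed.

Section Breakpoints.
Variables (R : archiRealFieldType) (ts : seq R).
Hypotheses (ts_sorted : sorted <=%R ts) (ts_unit : all (fun t => 0 <= t < 1) ts)
  (ts0 : 0 \in ts).

(* Past its end [ts] reads as 1, so the gaps [t k.+1 - t k], [k < size ts],
   cut [0, 1) into consecutive intervals. *)
Local Notation t k := (nth 1 ts k).

Lemma breakpoint_itv k : 0 <= t k <= 1.
Proof.
have [lt_k|le_k] := ltnP k (size ts); last by rewrite nth_default // ler01 lexx.
by have /andP[-> /ltW ->] := allP ts_unit _ (mem_nth 1 lt_k).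
Qed.

Lemma breakpoint_mono i j : (i <= j)%N -> t i <= t j.
Proof.
move=> le_ij; have [lt_j|le_j] := ltnP j (size ts).
  by apply: (sorted_leq_nth le_trans le_refl) => //; rewrite inE (leq_ltn_trans le_ij).
by rewrite (nth_default _ le_j); case/andP: (breakpoint_itv i).
Qed.

Lemma breakpoint0 : t 0 = 0.
Proof.
apply/eqP; rewrite eq_le; case/andP: (breakpoint_itv 0) => -> _.
by rewrite andbT -[X in _ <= X](nth_index 1 ts0) breakpoint_mono.
Qed.

Lemma sum_breakpoint_gaps : \sum_(k < size ts) (t k.+1 - t k) = 1.
Proof.
rewrite -(big_mkord xpredT (fun k => t k.+1 - t k)) telescope_sumr //.
by rewrite nth_default // breakpoint0 subr0.
Qed.

Lemma sum_breakpoint_gaps_le f : f \in ts ->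
  \sum_(k < size ts) (t k.+1 - t k) * ((t k.+1 <= f)%R : nat)%:R = f.
Proof.
move=> ts_f; have /andP[f_ge0 f_lt1] := allP ts_unit _ ts_f.
rewrite -(big_mkord xpredT (fun k => (t k.+1 - t k) * ((t k.+1 <= f)%R : nat)%:R)).
rewrite (telescope_sumr_eq (fun k => Num.min (t k) f)) //; last first.
  move=> k _; have [le_f|lt_f] := lerP (t k.+1) f.
    by rewrite mulr1 !min_l // (le_trans (breakpoint_mono (leqnSn k))).
  (* [f] is itself a breakpoint, so it cannot lie strictly inside a gap. *)
  have le_ft : f <= t k.
    have [lt_ki|le_ik] := ltnP k (index f ts).
      by have := breakpoint_mono lt_ki; rewrite (nth_index 1 ts_f) leNgt lt_f.
    by rewrite -[X in X <= _](nth_index 1 ts_f) breakpoint_mono.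
  by rewrite /= mulr0 !min_r ?subrr // ltW.
by rewrite nth_default // breakpoint0 (min_r (ltW f_lt1)) (min_l f_ge0) subr0.
Qed.

Lemma sum_breakpoint_floor x : fracpart x \in ts ->
  \sum_(k < size ts) (t k.+1 - t k) * (Num.floor (x + (1 - t k.+1)))%:~R = x.
Proof.
move=> ts_x; under eq_bigr do rewrite floorD1B ?breakpoint_itv // intrD mulrz_nat mulrDr.
rewrite big_split /= -mulr_suml sum_breakpoint_gaps mul1r.
by rewrite sum_breakpoint_gaps_le // /fracpart addrC subrK.
Qed.

End Breakpoints.

Section Load.
Variables (R : realDomainType) (e : nat -> R).

Fixpoint load j := if j is i.+1 then Num.max 0 (load i + e i) else 0.

Lemma load_ge0 j : 0 <= load j.
Proof. by case: j => //= j; rewrite le_max lexx. Qed.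

Lemma load_eq_sum j : exists2 i, (i <= j)%N & load j = \sum_(i <= k < j) e k.
Proof.
elim: j => [|j [i le_ij IHj]]; first by exists 0%N; rewrite ?big_geq.
have [le0|gt0] := lerP (load j + e j) 0.
  by exists j.+1; rewrite //= big_geq // max_l.
by exists i; rewrite ?leqW //= max_r ?ltW // big_nat_recr //= IHj.
Qed.

End Load.

Section Route.
Variables (V : eqType) (x0 : V) (r : seq V).

Lemma pos_nth j : (j < size r)%N -> pos r j.+1 = Some (nth x0 r j).
Proof. by move=> lt_j; rewrite /pos /= (nth_map x0). Qed.

Lemma pos_Some i v : pos r i = Some v ->
  exists j, [/\ i = j.+1, (j < size r)%N & v = nth x0 r j].
Proof.
case: i => [|j] //; have [lt_j|le_j] := ltnP j (size r).
  by rewrite pos_nth // => -[<-]; exists j.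
by rewrite /pos /= nth_default // size_map.
Qed.

Lemma subroute_nth a b : (a <= b < size r)%N ->
  subroute r a b = [seq nth x0 r i | i <- index_iota a b.+1].
Proof.
move=> /andP[le_ab lt_b].
have size_sub : size (subroute r a b) = (b - a).+1.
  by rewrite size_takel // size_drop; lia.
apply: (@eq_from_nth _ x0) => [|i]; first by rewrite size_sub size_map size_iota; lia.
rewrite size_sub => lt_i.
by rewrite nth_take // nth_drop (nth_map 0%N) ?size_iota ?nth_iota //; lia.
Qed.

Lemma big_subroute (T : Type) (idx : T) (op : T -> T -> T) (F : V -> T) a b :
  (a <= b < size r)%N ->
  \big[op/idx]_(v <- subroute r a b) F v = \big[op/idx]_(a <= i < b.+1) F (nth x0 r i).
Proof. by move=> hab; rewrite subroute_nth // big_map. Qed.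

End Route.

Section Recourse.
Variables (R : realType) (V : finType) (x0 : V) (C : rat) (dxi : V -> rat) (r : seq V).
Hypothesis C_gt0 : 0 < C.

Lemma kcap_le (S : seq V) (n : int) :
  (kcap C dxi S <= n) = (\sum_(v <- S) ratr (dxi v) <= ratr C * n%:~R :> R).
Proof.
by rewrite /kcap ceil_le_int ler_pdivrMr // mulrC -(ler_rat R) rmorphM rmorph_sum /= ratr_int.
Qed.

Lemma sum_le_kcap (S : seq V) :
  \sum_(v <- S) ratr (dxi v) <= ratr C * (kcap C dxi S)%:~R :> R.
Proof. by rewrite -kcap_le. Qed.

Lemma recourse_action_subroute (z : V -> nat) : recourse_action R C dxi r z ->
  forall a b, (a <= b < size r)%N ->
  (kcap C dxi (subroute r a b))%:~R - 1 <= \sum_(v <- subroute r a b) (z v)%:R :> R.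
Proof.
move=> [f [g [f_ge0 [g_ge0 [f_balance [f_le_cap g_le_cap]]]]]] a b hab.
have /andP[le_ab lt_b] := hab.
pose phi i := f (pos r i) (pos r i.+1).
have flow : \sum_(v <- subroute r a b) (ratr (dxi v) - g v) = phi b.+1 - phi a.
  rewrite (big_subroute x0) //; apply: telescope_sumr_eq => [|i /andP[_ lt_ib]].
    exact: leqW.
  have := f_balance i.+1 _ (pos_nth x0 (leq_trans lt_ib lt_b)).
  by rewrite /phi /=; lra.
have phi_a : 0 <= phi a := f_ge0 _ _.
have phi_b : phi b.+1 <= ratr C by apply: (f_le_cap b.+2); lia.
have g_le : \sum_(v <- subroute r a b) g v <= ratr C * \sum_(v <- subroute r a b) (z v)%:R.
  rewrite mulr_sumr !(big_subroute x0) //; apply: ler_sum_nat => i /andP[_ lt_ib].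
  exact/g_le_cap/(pos_nth x0 (leq_trans lt_ib lt_b)).
have : kcap C dxi (subroute r a b) <= (\sum_(v <- subroute r a b) z v)%N%:Z + 1.
  by rewrite kcap_le intrD sumMz; rewrite sumrB in flow; lra.
by rewrite -(ler_int R) intrD sumMz; lra.
Qed.

Section Sufficiency.
Variable z : V -> nat.
Hypotheses (dxi_ge0 : forall v, 0 <= dxi v) (r_uniq : uniq r).
Hypothesis z_subroute : forall a b, (a <= b < size r)%N ->
  (kcap C dxi (subroute r a b))%:~R - 1 <= \sum_(v <- subroute r a b) (z v)%:R :> R.

(* [L j] is the load on the arc leaving the [j]-th vertex of the route (the
   depot for [j = 0]): at each customer the vehicle picks up the demand, then
   unloads as much as the [z] depot trips allow. *)
Let excess j : R := ratr (dxi (nth x0 r j)) - ratr C * (z (nth x0 r j))%:R.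
Let L := load excess.

Lemma load_le_cap j : (j <= size r)%N -> L j <= ratr C.
Proof.
move=> le_jr; rewrite /L; have [i le_ij ->] := load_eq_sum excess j.
have C_gt0R : (0 : R) < ratr C by rewrite ltr0q.
case: j le_jr le_ij => [|j] le_jr le_ij; first by rewrite big_geq // ltW.
have [eq_ij|lt_ij] := eqVneq i j.+1; first by rewrite eq_ij big_geq // ltW.
have hij : (i <= j < size r)%N by apply/andP; split; lia.
rewrite /excess big_split /= sumrN -mulr_sumr.
rewrite -(big_subroute x0 _ _ (fun v => ratr (dxi v)) hij).
rewrite -(big_subroute x0 _ _ (fun v => (z v)%:R) hij).
have d_le := sum_le_kcap (subroute r i j); have z_ge := z_subroute hij.
have Cz_ge : ratr C * ((kcap C dxi (subroute r i j))%:~R - 1)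
    <= ratr C * \sum_(v <- subroute r i j) (z v)%:R :> R by rewrite ler_wpM2l // ltW.
lra.
Qed.

Lemma subroute_recourse_action : recourse_action R C dxi r z.
Proof.
pose f (u w : option V) := if u is Some v then L (index v r).+1 else 0.
pose g v := Num.min (L (index v r) + ratr (dxi v)) (ratr C * (z v)%:R).
have f_pos j w : (j <= size r)%N -> f (pos r j) w = L j.
  case: j => [_|j lt_j]; first by rewrite /f /L.
  by rewrite (pos_nth x0 lt_j) /f index_uniq.
exists f, g; split; [|split; [|split; [|split]]].
- by case=> [v|] w; rewrite /f ?load_ge0.
- move=> v; rewrite le_min addr_ge0 ?load_ge0 ?ler0q //.
  by rewrite /= mulr_ge0 ?ler0n // ler0q ltW.
- move=> i v /(pos_Some x0)[j [-> lt_jr ->]]; rewrite /= !f_pos ?(ltnW lt_jr) //.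
  rewrite /g index_uniq //= /L /excess /=.
  set l := load _ j; set u := ratr C * _.
  have [le_u|lt_u] := lerP (l + ratr (dxi (nth x0 r j))) u.
    by rewrite max_l; lra.
  by rewrite max_r; lra.
- by move=> i /andP[i_ge1 i_le]; rewrite f_pos ?load_le_cap //; lia.
- by move=> i v _; rewrite /g ge_min lexx orbT.
Qed.

End Sufficiency.
End Recourse.

Section Rounding.
Variables (R : realType) (V : finType) (N : nat) (x0 : V) (C : rat)
  (d : 'I_N -> V -> rat) (r : seq V) (y : 'I_N -> V -> R).
Hypotheses (C_gt0 : 0 < C) (d_ge0 : forall xi v, 0 <= d xi v) (r_uniq : uniq r).
Hypothesis y_poly : route_polyhedron C d r y.

Definition route_prefix xi j := \sum_(0 <= k < j) y xi (nth x0 r k).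

Definition rounding (theta : R) xi v : int :=
  Num.floor (route_prefix xi (index v r) + y xi v + theta)
  - Num.floor (route_prefix xi (index v r) + theta).

Lemma rounding_ge0 theta xi v : 0 <= rounding theta xi v.
Proof. by rewrite subr_ge0 le_floor // lerD2r lerDl y_poly.1. Qed.

Lemma rounding_subroute theta xi a b : (a <= b < size r)%N ->
  (kcap C (d xi) (subroute r a b))%:~R - 1
    <= \sum_(v <- subroute r a b) (rounding theta xi v)%:~R :> R.
Proof.
move=> hab; have /andP[le_ab lt_b] := hab.
pose F j := Num.floor (route_prefix xi j + theta).
have -> : \sum_(v <- subroute r a b) (rounding theta xi v)%:~R = (F b.+1 - F a)%:~R :> R.
  rewrite (big_subroute x0) // intrB.
  apply: (telescope_sumr_eq (fun j => (F j)%:~R)) => [|i /andP[_ lt_ib]].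
    exact: leqW.
  rewrite /rounding index_uniq ?(leq_trans lt_ib) // intrB /F /route_prefix.
  by rewrite big_nat_recr.
have prefix_b : route_prefix xi b.+1
    = route_prefix xi a + \sum_(v <- subroute r a b) y xi v.
  by rewrite (big_subroute x0) // -big_cat_nat // leqW.
have := y_poly.2 xi a b hab; set k := kcap _ _ _ => y_ge.
have F_gap : F a + (k - 1) <= F b.+1.
  rewrite floor_ge_int intrD intrB; have := floor_itv (route_prefix xi a + theta).
  by rewrite /F prefix_b; lra.
by move: F_gap; rewrite -(ler_int R) intrD intrB; lra.
Qed.

Lemma rounding_nat theta xi v :
  (absz (rounding theta xi v))%:R = (rounding theta xi v)%:~R :> R.
Proof. by rewrite natr_absz ger0_norm ?rounding_ge0. Qed.

Lemma rounding_policy theta :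
  policies C d r (fun xi v => (absz (rounding theta xi v))%:R : R).
Proof.
move=> xi; exists (fun v => absz (rounding theta xi v)); split=> //.
apply: subroute_recourse_action => // a b hab.
under eq_bigr do rewrite rounding_nat.
exact: rounding_subroute.
Qed.

Lemma route_polyhedron_conv_policies : conv (policies C d r) y.
Proof.
pose lo p := route_prefix p.1 (index p.2 r).
pose hi p := lo p + y p.1 p.2.
pose ts := sort <=%R (0 :: [seq fracpart (lo p) | p : 'I_N * V]
                         ++ [seq fracpart (hi p) | p : 'I_N * V]).
have ts_sorted : sorted <=%R ts by apply: sort_sorted; exact: le_total.
have ts_unit : all (fun t => 0 <= t < 1) ts.
  apply/allP=> t; rewrite mem_sort inE => /orP[/eqP->|]; first by rewrite lexx ltr01.
  by rewrite mem_cat => /orP[] /mapP[p _ ->]; exact: fracpart_itv.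
have ts0 : 0 \in ts by rewrite mem_sort mem_head.
have ts_lo p : fracpart (lo p) \in ts.
  by rewrite mem_sort inE mem_cat (map_f _ (mem_enum _ p)) orbT.
have ts_hi p : fracpart (hi p) \in ts.
  by rewrite mem_sort inE mem_cat (map_f _ (mem_enum _ p)) !orbT.
exists (size ts), (fun k => nth 1 ts k.+1 - nth 1 ts k),
  (fun k xi v => (absz (rounding (1 - nth 1 ts k.+1) xi v))%:R).
split; [|split; [|split]].
- by move=> k; rewrite subr_ge0 breakpoint_mono.
- exact: sum_breakpoint_gaps.
- by move=> k; apply: rounding_policy.
- move=> xi v; under eq_bigr do rewrite rounding_nat intrB mulrBr.
  rewrite sumrB (sum_breakpoint_floor _ _ _ (ts_hi (xi, v))) //.
  by rewrite (sum_breakpoint_floor _ _ _ (ts_lo (xi, v))) // /hi addrC addKr.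
Qed.

End Rounding.

Section Convexity.
Variables (R : realType) (V : finType) (N : nat).

Lemma sub_conv (S T : ('I_N -> V -> R) -> Prop) y :
  (forall x, S x -> T x) -> conv S y -> conv T y.
Proof.
move=> ST [n [w [x [w_ge0 [w_sum1 [Sx y_eq]]]]]].
by exists n, w, x; do 3!split=> //; move=> j; exact: ST.
Qed.

Variables (C : rat) (d : 'I_N -> V -> rat) (r : seq V).

Lemma conv_route_polyhedron (y : 'I_N -> V -> R) :
  conv (route_polyhedron C d r) y -> route_polyhedron C d r y.
Proof.
case=> n [w [x [w_ge0 [w_sum1 [x_poly y_eq]]]]]; split=> [xi v|xi a b hab].
  by rewrite y_eq sumr_ge0 // => j _; rewrite mulr_ge0 ?(x_poly j).1.
under eq_bigr do rewrite y_eq.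
set k := (kcap _ _ _)%:~R; rewrite exchange_big /=.
rewrite -[k - 1]mul1r -[1 in X in X * _]w_sum1 mulr_suml.
apply: ler_sum => j _; rewrite -mulr_sumr ler_wpM2l //.
exact: (x_poly j).2.
Qed.

Lemma policies_route_polyhedron (x0 : V) (y : 'I_N -> V -> R) : 0 < C ->
  policies C d r y -> route_polyhedron C d r y.
Proof.
move=> C_gt0 y_pol; split=> [xi v|xi a b hab]; have [z [y_z z_rec]] := y_pol xi.
  by rewrite y_z ler0n.
under eq_bigr do rewrite y_z.
exact: recourse_action_subroute.
Qed.

End Convexity.

Unset Implicit Arguments.
Theorem theorem2 (R : realType) (V : finType) (N : nat) (C : rat)
    (d : 'I_N -> V -> rat) (r : seq V)
    (hC : 0 < C)
    (hd0 : forall xi v, 0 <= d xi v)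
    (hdC : forall xi v, d xi v <= C)
    (hr : r != [::]) (hu : uniq r) :
  forall y : 'I_N -> V -> R,
    @conv R V N (@policies R V N C d r) y <-> @route_polyhedron R V N C d r y.
Proof.
have [x0 _] : {x0 : V | true} by case: r hr hu => // x0.
move=> y; split=> [y_conv|y_poly]; last exact: route_polyhedron_conv_policies.
apply: conv_route_polyhedron; apply: sub_conv y_conv => x.
exact: policies_route_polyhedron.
Qed.
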